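(* Let $(G,\vdash,\dashv)$ be a dimonoid. Then an element $e\in G$ is a left neutral element for $(G,\vdash)$ (i.e. $e\vdash x=x$ for all $x\in G$) if and only if it is a right neutral element for $(G,\dashv)$ (i.e. $x\dashv e=x$ for all $x\in G$).
   Context: A disemigroup $(G,\vdash,\dashv)$ is a set with two binary operations such that (G1) $(G,\vdash)$ and $(G,\dashv)$ are semigroups; (G2) $x\vdash(y\dashv z)=(x\vdash y)\dashv z$; (G3) $x\dashv(y\vdash z)=x\dashv(y\dashv z)$; (G4) $(x\dashv y)\vdash z=(x\vdash y)\vdash z$ for all $x,y,z$. A dimonoid is a disemigroup with (G5) some $1\in G$ with $1\vdash x=x\dashv 1=x$ for all $x$. A digroup is a dimonoid with a fixed such $1$ satisfying (G6): for every $x$ there is $x^{-1}$ with $x\vdash x^{-1}=x^{-1}\dashv x=1$. *)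

(* Plain Rocq: disemigroups / dimonoids on a carrier type G with two
   binary operations l (for |-) and r (for -|). *)

Definition is_disemigroup {G : Type} (l r : G -> G -> G) : Prop :=
  (forall x y z, l x (l y z) = l (l x y) z) /\
  (forall x y z, r x (r y z) = r (r x y) z) /\
  (forall x y z, l x (r y z) = r (l x y) z) /\
  (forall x y z, r x (l y z) = r x (r y z)) /\
  (forall x y z, l (r x y) z = l (l x y) z).

Definition is_dimonoid {G : Type} (l r : G -> G -> G) : Prop :=
  is_disemigroup l r /\
  exists one : G, forall x, l one x = x /\ r x one = x.


Section NeutralElements.

Variables (G : Type) (l r : G -> G -> G).

Lemma right_neutral_of_left_neutral (one e : G) :
  (forall x y z, r x (l y z) = r x (r y z)) ->
  (forall x, r x one = x) ->
  (forall x, l e x = x) -> forall x, r x e = x.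
Proof.
  intros G3 r_one l_e x.
  (* x -| e = x -| (e -| 1) = x -| (e |- 1) = x -| 1 = x *)
  rewrite <- (r_one e), <- G3, l_e.
  apply r_one.
Qed.

Lemma left_neutral_of_right_neutral (one e : G) :
  (forall x y z, l (r x y) z = l (l x y) z) ->
  (forall x, l one x = x) ->
  (forall x, r x e = x) -> forall x, l e x = x.
Proof.
  intros G4 l_one r_e x.
  (* e |- x = (1 |- e) |- x = (1 -| e) |- x = 1 |- x = x *)
  rewrite <- (l_one e), <- G4, r_e.
  apply l_one.
Qed.

End NeutralElements.

Theorem lemma4p4 (G : Type) (l r : G -> G -> G) (e : G) :
  is_dimonoid l r ->
  ((forall x : G, l e x = x) <-> (forall x : G, r x e = x)).
Proof.
  intros [[_ [_ [_ [G3 G4]]]] [one one_neutral]].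
  split.
  - apply (right_neutral_of_left_neutral G l r one e G3).
    intro x; apply one_neutral.
  - apply (left_neutral_of_right_neutral G l r one e G4).
    intro x; apply one_neutral.
Qed.
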